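(* Let $(X_\lambda)_{\lambda\in\Lambda}$ be a family of topological spaces such that $C(X_{\lambda_0})$ has the countable sup property for some $\lambda_0\in\Lambda$ and $X_\lambda$ has calibre $\aleph_1$ for every $\lambda\in\Lambda\setminus\{\lambda_0\}$. Then $C(\prod_{\lambda\in\Lambda}X_\lambda)$ has the countable sup property.
   Context: Products carry the product topology. $C(Z)$ is the vector lattice of real-valued continuous functions on $Z$ with the pointwise order. A vector lattice has the countable sup property if every nonempty subset possessing a supremum contains a countable subset with the same supremum. A space has calibre $\aleph_1$ if every uncountable family of nonempty open subsets contains an uncountable subfamily with nonempty intersection. *)

From HB Require Import structures.
From mathcomp Require Import all_boot all_order all_algebra.
From mathcomp Require Import all_classical all_reals all_analysis.
Set Implicit Arguments. Unset Strict Implicit. Unset Printing Implicit Defensive.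
Import Order.TTheory GRing.Theory Num.Theory numFieldTopology.Exports numFieldNormedType.Exports.
Local Open Scope classical_set_scope.
Local Open Scope ring_scope.

(* C(Z): real-valued continuous functions on Z, pointwise order.
   [is_sup_C S f] : f is the supremum of S in the vector lattice C(Z). *)
Definition is_sup_C (R : realType) (Z : topologicalType)
    (S : set (Z -> R)) (f : Z -> R) : Prop :=
  continuous f /\
  (forall g, S g -> forall z, g z <= f z) /\
  (forall h : Z -> R, continuous h ->
     (forall g, S g -> forall z, g z <= h z) -> forall z, f z <= h z).

Definition C_countable_sup_property (R : realType) (Z : topologicalType) : Prop :=
  forall (S : set (Z -> R)), S `<=` [set g | continuous g] -> S !=set0 ->
  forall f, is_sup_C S f ->
  exists S' : set (Z -> R), S' `<=` S /\ countable S' /\ is_sup_C S' f.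

Definition calibre_aleph1 (X : topologicalType) : Prop :=
  forall F : set (set X),
    (forall A, F A -> open A /\ A !=set0) -> ~ countable F ->
    exists G : set (set X), G `<=` F /\ ~ countable G /\
      (\bigcap_(A in G) A) !=set0.

From HB Require Import structures.
From mathcomp Require Import all_boot all_order all_algebra.
From mathcomp Require Import all_classical all_reals all_analysis.
From mathcomp Require Import lra.
Import numFieldTopology.Exports numFieldNormedType.Exports.
Set Implicit Arguments. Unset Strict Implicit. Unset Printing Implicit Defensive.
Import Order.TTheory GRing.Theory Num.Theory.
Local Open Scope classical_set_scope.
Local Open Scope ring_scope.

(* The countable sup property of C(Z) is equivalent to the countable chain
   condition for cozero sets of Z.  A supremum f of S in C(Z) is characterised
   by: for every e > 0, every nonempty cozero set contains a point where some
   g in S exceeds f - e.  Under the chain condition, a maximal disjoint family of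
   cozero sets, on each of which a single g in S is e-close to f, is countable,
   and the chosen g's for e = 1/(n+1) form a countable subset with supremum f.
   Conversely, for a disjoint family F of cozero sets, the functions below 1
   whose cozero set lies in a member of F or misses all of them have supremum 1,
   and a subset with supremum 1 needs a member meeting each set of F, while no
   member meets two of them.
   It remains to show the chain condition for the product.  Shrink uncountably
   many disjoint cozero sets to open boxes.  By induction on the size of their
   supports, using calibre aleph_1 on a coordinate shared by uncountably many
   boxes, and otherwise a maximal family of boxes with disjoint supports,
   uncountably many of them share a point y off the coordinate l0.  Their slices
   through y along l0 are uncountably many disjoint nonempty cozero sets of X l0. *)

Lemma inj_rel_countable T U (A : set T) (B : set U) (rel : T -> U -> Prop) :
  countable B -> (forall a, A a -> exists2 b, B b & rel a b) ->
  (forall a a' b, A a -> A a' -> B b -> rel a b -> rel a' b -> a = a') ->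
  countable A.
Proof.
move=> cB relA relI.
have sub : A `<=` \bigcup_(b in B) [set a | A a /\ rel a b].
  by move=> a Aa; have [b Bb rab] := relA a Aa; exists b.
apply: sub_countable (subset_card_le sub) _; apply: bigcup_countable => // b Bb.
have [[a0 [Aa0 ra0]]|none] := pselect (exists a, A a /\ rel a b).
  apply: sub_countable (countable1 a0); apply: subset_card_le => a [Aa ra].
  exact: (relI a a0 b).
suff -> : [set a | A a /\ rel a b] = set0 by exact: countable0.
by apply/seteqP; split=> // a ?; apply: none; exists a.
Qed.

Lemma countableU T (A B : set T) : countable A -> countable B -> countable (A `|` B).
Proof.
move=> cA cB; rewrite (_ : A `|` B = \bigcup_(b in [set: bool]) if b then A else B).
  by apply: bigcup_countable => // -[].
by apply/seteqP; split=> [x [Ax|Bx]|x [[]]]; [exists true | exists false | left | right].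
Qed.

Lemma uncountable_bigcup_nat T (A : set T) (F : nat -> set T) :
  ~ countable A -> A `<=` \bigcup_n F n -> exists n, ~ countable (A `&` F n).
Proof.
move=> nA AF; apply: contrapT => allc; apply: nA.
apply: sub_countable (subset_card_le (_ : A `<=` \bigcup_n (A `&` F n))) _.
  by move=> a Aa; have [n _ Fa] := AF a Aa; exists n.
apply: bigcup_countable => // n _; apply: contrapT => nc; apply: allc; by exists n.
Qed.

Lemma uncountable_neq0 T (A : set T) : ~ countable A -> A !=set0.
Proof. by move=> nA; apply/set0P/eqP => A0; apply: nA; rewrite A0 countable0. Qed.

Lemma exists_maximal_pairwise T (A : set T) (rel : T -> T -> Prop) :
  (forall a b, rel a b -> rel b a) ->
  exists M, [/\ M `<=` A, (forall a b, M a -> M b -> a <> b -> rel a b) &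
    (forall a, A a -> ~ M a -> exists2 b, M b & ~ rel a b)].
Proof.
move=> relC.
pose pairwise M := M `<=` A /\ forall a b, M a -> M b -> a <> b -> rel a b.
have [M [[MA Mrel] Mmax]] : exists M, pairwise M /\ forall N, M `<` N -> ~ pairwise N.
  apply: Zorn_bigcup => C Cpw Ctot; split.
    by move=> x [N CN Nx]; exact: (Cpw N CN).1.
  move=> a b [N CN Na] [N' CN' Nb] ab.
  have [NN'|N'N] := Ctot N N' CN CN'.
    exact: (Cpw N' CN').2 (NN' _ Na) Nb ab.
  exact: (Cpw N CN).2 Na (N'N _ Nb) ab.
exists M; split => // a Aa Ma; apply: contrapT => relM.
have {}relM b : M b -> rel a b.
  by move=> Mb; apply: contrapT => nrel; apply: relM; exists b.
apply: (Mmax (M `|` [set a])); last split.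
- by split=> [x Mx|MaM]; [left | apply: Ma; apply: MaM; right].
- by move=> x [/MA|->].
- move=> x y [Mx|->] [My|->] xy //; first exact: Mrel.
    by apply: relC; exact: relM.
  exact: relM.
Qed.

Lemma size_filter_predC1_lt (T : eqType) (x : T) (s : seq T) :
  x \in s -> (size [seq y <- s | y != x] < size s)%N.
Proof.
move=> xs; rewrite size_filter -(count_predC (predC1 x) s) -addn1 leq_add2l.
by rewrite -has_count; apply/hasP; exists x; rewrite //= eqxx.
Qed.

Lemma calibre_aleph1_family (Y : topologicalType) T (A : set T) (W : T -> set Y) :
  calibre_aleph1 Y -> ~ countable A -> (forall a, A a -> open (W a) /\ W a !=set0) ->
  exists x, exists2 A' : set T, A' `<=` A /\ ~ countable A' & forall a, A' a -> W a x.
Proof.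
move=> calY nA AW.
have [cWA|nWA] := pselect (countable (W @` A)).
  have [U WAU nU] : exists2 U, (W @` A) U & ~ countable [set a | A a /\ W a = U].
    apply: contrapT => allc; apply: nA.
    apply: sub_countable (subset_card_le (_ : A `<=`
      \bigcup_(U in W @` A) [set a | A a /\ W a = U])) _.
      by move=> a Aa; exists (W a) => //; exists a.
    apply: bigcup_countable => // U WAU; apply: contrapT => nc; apply: allc.
    by exists U.
  have [a Aa WaU] := WAU; have [x Wax] := (AW a Aa).2.
  by exists x, [set a | A a /\ W a = U] => [|b [_ ->]]; [split=> // b [] | rewrite -WaU].
have WAo U : (W @` A) U -> open U /\ U !=set0 by move=> [a Aa <-]; exact: AW.
have [G [GWA [nG [x Gx]]]] := calY (W @` A) WAo nWA.
exists x, [set a | A a /\ G (W a)] => [|a [_ GWa]]; last exact: Gx.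
split=> [a []//|cA]; apply: nG.
apply: sub_countable (subset_card_le (_ : G `<=` W @` [set a | A a /\ G (W a)])) _.
  by move=> U GU; have [a Aa WaU] := GWA U GU; exists a => //=; rewrite WaU.
exact: sub_countable (card_image_le _ _) cA.
Qed.

Section sup_in_C.
Variables (R : realType) (Z : topologicalType).

Definition cozero_approximable (S : set (Z -> R)) (f : Z -> R) : Prop :=
  forall phi : Z -> R, continuous phi -> forall z0, 0 < phi z0 ->
  forall e : R, 0 < e -> exists2 g, S g & exists2 z, 0 < phi z & f z - e < g z.

Lemma is_sup_CP (S : set (Z -> R)) (f : Z -> R) :
  is_sup_C S f <->
  [/\ continuous f, forall g, S g -> forall z, g z <= f z & cozero_approximable S f].
Proof.
split=> [[cf [ubf leastf]]|[cf ubf approxf]].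
  split=> // phi cphi z0 phiz0 e e0; apply: contrapT => noapprox.
  have gle g z : S g -> 0 < phi z -> g z <= f z - e.
    move=> Sg phiz; rewrite leNgt; apply/negP => lt.
    by apply: noapprox; exists g => //; exists z.
  (* lower [f] by [min(e, phi^+)]: still an upper bound of [S], but below [f] at [z0] *)
  pose h := f - (cst e \min (phi \max cst 0)).
  have ch : continuous h.
    move=> z; apply: continuousB; first exact: cf.
    apply: min_fun_continuous; first exact: cst_continuous.
    by apply: max_fun_continuous => //; exact: cst_continuous.
  have ubh g : S g -> forall z, g z <= h z.
    move=> Sg z; rewrite /h !fctE /=; have [phiz|phiz] := ltP 0 (phi z).
      apply: le_trans (gle g z Sg phiz) _; rewrite lerD2l lerN2 ge_min lexx //=.
    by rewrite (min_idPr (ltW e0)) subr0; exact: ubf.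
  have := leastf h ch ubh z0; rewrite /h !fctE /= (max_idPl (ltW phiz0)).
  have : 0 < Num.min e (phi z0) by rewrite lt_min e0 phiz0.
  lra.
split=> //; split=> // h ch ubh z; rewrite leNgt; apply/negP => hf.
pose e := (f z - h z) / 2.
have e0 : 0 < e by rewrite divr_gt0 // subr_gt0.
have cphi : continuous (f - h - cst e).
  move=> w; apply: continuousB; last exact: cst_continuous.
  exact: continuousB (cf w) (ch w).
have phiz : 0 < (f - h - cst e) z by rewrite !fctE /= /e; lra.
have [g Sg [w phiw gw]] := approxf _ cphi z phiz e e0.
by have := ubh g Sg w; move: phiw gw; rewrite !fctE /=; lra.
Qed.

End sup_in_C.

Definition cozero_set (R : realType) (Z : topologicalType) (W : set Z) : Prop :=
  exists2 phi : Z -> R, continuous phi & W = [set z | 0 < phi z].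

Definition cozero_ccc (R : realType) (Z : topologicalType) : Prop :=
  forall F : set (set Z), (forall D, F D -> cozero_set R D /\ D !=set0) ->
  (forall D D' z, F D -> F D' -> D z -> D' z -> D = D') -> countable F.

Section cozero.
Variables (R : realType) (Z : topologicalType).

Lemma cozero_setI (A B : set Z) :
  cozero_set R A -> cozero_set R B -> cozero_set R (A `&` B).
Proof.
move=> [phi cphi ->] [psi cpsi ->]; exists (phi \min psi).
  exact: min_fun_continuous.
by apply/seteqP; split=> z /=; rewrite lt_min => /andP.
Qed.

Lemma cozero_set_open (A : set Z) : cozero_set R A -> open A.
Proof.
move=> [phi cphi ->]; rewrite (_ : [set z | _] = phi @^-1` `]0, +oo[).
  by apply: open_comp => [z _|]; [exact: cphi | exact: rray_open].
by apply/seteqP; split=> z /=; rewrite in_itv /= andbT.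
Qed.

Lemma cozero_set_preimage (Y : topologicalType) (f : Y -> Z) (A : set Z) :
  continuous f -> cozero_set R A -> cozero_set R (f @^-1` A).
Proof.
move=> cf [phi cphi ->]; exists (phi \o f) => //.
by move=> y; apply: continuous_comp; [exact: cf | exact: cphi].
Qed.

Lemma unit_bump (phi : Z -> R) z1 : continuous phi -> 0 < phi z1 ->
  exists2 g : Z -> R, continuous g /\ (forall z, g z <= 1) &
    g z1 = 1 /\ [set z | 0 < g z] `<=` [set z | 0 < phi z].
Proof.
move=> cphi phiz1; exists (cst 1 \min (cst (phi z1)^-1 \* phi)); split.
- apply: min_fun_continuous; first exact: cst_continuous.
  by move=> z; apply: continuousM; [exact: cst_continuous | exact: cphi].
- by move=> z; rewrite /= ge_min lexx.
- by rewrite /= mulVf ?gt_eqF // minxx.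
- by move=> z /=; rewrite lt_min => /andP[_]; rewrite pmulr_rgt0 // invr_gt0.
Qed.

Definition subordinate (F : set (set Z)) (g : Z -> R) : Prop :=
  (exists2 D, F D & [set z | 0 < g z] `<=` D) \/ (forall D z, F D -> 0 < g z -> ~ D z).

Definition subordinate_bumps (F : set (set Z)) : set (Z -> R) :=
  [set g : Z -> R | [/\ continuous g, forall z, g z <= 1 & subordinate F g]].

Lemma is_sup_C_subordinate_bumps (F : set (set Z)) :
  (forall D, F D -> cozero_set R D) -> is_sup_C (subordinate_bumps F) (cst 1).
Proof.
move=> Fcoz; apply/is_sup_CP; split=> [|g [] //|psi cpsi z0 psiz0 e e0].
  exact: cst_continuous.
have [phi [cphi [z1 phiz1 phipsi]] subphi] : exists2 phi : Z -> R, continuous phi /\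
    exists2 z1 : Z, 0 < phi z1 & [set z | 0 < phi z] `<=` [set z | 0 < psi z] &
    subordinate F phi.
  have [[D FD [z1 psiz1 Dz1]]|none] := pselect (exists2 D, F D & exists2 z, 0 < psi z & D z).
    have [chi cchi Dchi] := Fcoz D FD.
    exists (psi \min chi); last by left; exists D => // z; rewrite Dchi /= lt_min => /andP[].
    split; first exact: min_fun_continuous.
    exists z1; last by move=> z /=; rewrite lt_min => /andP[].
    by rewrite /= lt_min psiz1 /=; move: Dz1; rewrite Dchi.
  exists psi; first by split=> //; exists z0.
  by right=> D z FD psiz Dz; apply: none; exists D => //; exists z.
have [g [cg g1] [gz1 gphi]] := unit_bump cphi phiz1.
exists g; last by exists z1; [exact: phipsi | rewrite gz1 /=; lra].
split=> //; case: subphi => [[D FD phiD]|out]; [left; exists D | right] => //.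
  by move=> z /gphi /phiD.
by move=> D z FD /gphi; exact: out.
Qed.

Lemma csp_cozero_ccc : C_countable_sup_property R Z -> cozero_ccc R Z.
Proof.
move=> csp F Fcoz Fdisj.
have Sc : subordinate_bumps F `<=` [set g | continuous g] by move=> g [].
have S0 : subordinate_bumps F !=set0.
  exists (cst 0); split=> [|z|]; [exact: cst_continuous | exact: ler01 |].
  by right=> D z _ /=; rewrite ltxx.
have S1 := is_sup_C_subordinate_bumps (fun D FD => (Fcoz D FD).1).
have [S' [S'S [cS' S'1]]] := csp _ Sc S0 _ S1.
have [_ _ S'approx] := (is_sup_CP _ _).1 S'1.
apply: (inj_rel_countable (rel := fun D g => exists2 z, D z & 0 < g z)) cS' _ _.
  move=> D FD; have [[chi cchi Dchi] [z0 Dz0]] := Fcoz D FD.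
  have chiz0 : 0 < chi z0 by move: Dz0; rewrite Dchi.
  have [g S'g [z chiz gz]] := S'approx chi cchi z0 chiz0 1 ltr01.
  by exists g => //; exists z; [rewrite Dchi | move: gz; rewrite /= subrr].
move=> D D' g FD FD' /S'S [_ _ [[D0 FD0 gD0]|out]] [z Dz gz] [z' D'z' gz'].
  by rewrite (Fdisj D D0 z FD FD0 Dz (gD0 z gz)) (Fdisj D' D0 z' FD' FD0 D'z' (gD0 z' gz')).
by case: (out D z FD gz Dz).
Qed.

Lemma countable_approximants (S : set (Z -> R)) (f : Z -> R) (e : R) :
  cozero_ccc R Z -> S `<=` [set g | continuous g] -> continuous f ->
  cozero_approximable S f -> 0 < e ->
  exists S' : set (Z -> R), [/\ S' `<=` S, countable S' &
    forall phi : Z -> R, continuous phi -> forall z0, 0 < phi z0 ->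
    exists2 g, S' g & exists2 z, 0 < phi z & f z - e < g z].
Proof.
move=> ccc Sc cf approx e0.
pose Fam := [set W : set Z | [/\ cozero_set R W, W !=set0 &
  exists2 g, S g & forall z, W z -> f z - e < g z]].
have [M [MF Mdisj Mmax]] := @exists_maximal_pairwise _ Fam (fun W W' => W `&` W' = set0)
  (fun W W' WW' => etrans (setIC W' W) WW').
have /choice [pick pickP] : forall W : set Z, exists g, Fam W ->
    S g /\ forall z, W z -> f z - e < g z.
  move=> W; have [[_ _ [g Sg gW]]|nFW] := pselect (Fam W); first by exists g.
  by exists f => /nFW.
exists (pick @` M); split.
- by move=> _ [W MW <-]; exact: (pickP W (MF W MW)).1.
- apply: sub_countable (card_image_le _ _) _; apply: ccc => [W /MF []//|W W' z MW MW' Wz W'z].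
  by apply: contrapT => neq; rewrite -[False]/(set0 z) -(Mdisj W W').
move=> phi cphi z0 phiz0.
have [g Sg [z1 phiz1 gz1]] := approx phi cphi z0 phiz0 e e0.
pose W := [set z | 0 < phi z] `&` [set z | 0 < g z - f z + e].
have Wz1 : W z1 by split => //=; lra.
have FW : Fam W.
  split; [|by exists z1|by exists g => // z [_ /=]; lra].
  apply: cozero_setI; first by exists phi.
  exists (g - f + cst e) => //.
  move=> z; apply: continuousD; last exact: cst_continuous.
  exact: continuousB (Sc g Sg z) (cf z).
have [W' MW' [z [[phiz _] W'z]]] : exists2 W', M W' & W `&` W' !=set0.
  have [MW|nMW] := pselect (M W); first by exists W => //; exists z1.
  have [W' MW' WW'] := Mmax W FW nMW.
  by exists W' => //; apply/set0P/eqP.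
exists (pick W'); first by exists W'.
by exists z => //; exact: (pickP W' (MF W' MW')).2.
Qed.

Lemma cozero_ccc_csp : cozero_ccc R Z -> C_countable_sup_property R Z.
Proof.
move=> ccc S Sc _ f Sf; have [cf ubf approx] := (is_sup_CP S f).1 Sf.
have /choice [Sn SnP] : forall n : nat, exists S' : set (Z -> R),
    [/\ S' `<=` S, countable S' & forall phi : Z -> R, continuous phi -> forall z0,
    0 < phi z0 -> exists2 g, S' g & exists2 z, 0 < phi z & f z - n.+1%:R^-1 < g z].
  by move=> n; apply: countable_approximants; rewrite ?invr_gt0.
have SnS n : Sn n `<=` S by have [] := SnP n.
exists (\bigcup_n Sn n); split; [|split].
- by move=> g [n _ /SnS].
- by apply: bigcup_countable => // n _; have [] := SnP n.
apply/is_sup_CP; split=> // [g [n _ /SnS /ubf] //|phi cphi z0 phiz0 e e0].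
have [n ne] := ltr_add_invr e0; rewrite add0r in ne.
have [_ _ /(_ phi cphi z0 phiz0) [g Sng [z phiz gz]]] := SnP n.
by exists g; [exists n | exists z => //; set en := _^-1 in ne gz; lra].
Qed.

End cozero.

Section product_boxes.
Context {I : eqType} {K : I -> topologicalType}.
Local Notation P := (prod_topology K).

Definition box (W : forall i, set (K i)) : set P := [set z | forall i, W i (z i)].

Definition open_box_at (p : P) (s : seq I) (W : forall i, set (K i)) : Prop :=
  [/\ forall i, open (W i), box W p & forall i, i \notin s -> W i = setT].

Lemma nbhs_open_box (p : P) (D : set P) :
  nbhs p D -> exists s W, open_box_at p s W /\ box W `<=` D.
Proof.
pose B := filter_from (fun sW : seq I * (forall i, set (K i)) => open_box_at p sW.1 sW.2)
  (fun sW => box sW.2).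
have FB : Filter B.
  apply: filter_from_filter.
    exists ([::], fun i => setT); split=> //= i; exact: openT.
  move=> [s1 W1] [s2 W2] /= [oW1 pW1 W1T] [oW2 pW2 W2T].
  exists (s1 ++ s2, fun i => W1 i `&` W2 i); last by move=> z /= Wz; split=> i; have [] := Wz i.
  split=> /= [i|i|i]; first exact: openI.
    by split; [exact: pW1 | exact: pW2].
  by rewrite mem_cat negb_or => /andP[/W1T -> /W2T ->]; rewrite setIT.
suff /(_ D) pB : B --> p by move=> /pB [[s W] /= pW WD]; exists s, W.
apply/cvg_sup => i U [_ [[V oV <-] Vpi VU]].
exists ([:: i], dfwith (fun j => @setT (K j)) i V).
  split=> /= [j|j|j]; case: dfwithP => //; first by move=> k _; exact: openT.
  by rewrite inE eqxx.
by move=> z /(_ i) /=; rewrite dfwithin => /VU.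
Qed.

Lemma open_box_at_dfwithT (p : P) s W l :
  open_box_at p s W -> open_box_at p [seq i <- s | i != l] (dfwith W l setT).
Proof.
move=> [oW pW WT]; split=> i; case: dfwithP => //; first exact: openT.
by move=> j lj; rewrite mem_filter eq_sym lj => /WT.
Qed.

Section calibre_off_l0.
Variable l0 : I.
Hypothesis calK : forall l, l != l0 -> calibre_aleph1 (K l).

Definition common_point_off T (A : set T) (W : T -> forall i, set (K i)) : Prop :=
  exists (y : P) (A' : set T),
    [/\ A' `<=` A, ~ countable A' & forall a i, A' a -> i != l0 -> W a i (y i)].

Lemma common_point_offS T (A B : set T) (W : T -> forall i, set (K i)) :
  A `<=` B -> common_point_off A W -> common_point_off B W.
Proof.
by move=> AB [y [A' [A'A nA' A'y]]]; exists y, A'; split=> // a /A'A /AB.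
Qed.

Lemma common_point_off_dfwith T (A : set T) (W : T -> forall i, set (K i)) l x :
  (forall a, A a -> W a l x) ->
  common_point_off A (fun a => dfwith (W a) l setT) -> common_point_off A W.
Proof.
move=> AWx [y [A' [A'A nA' A'y]]]; exists (dfwith y l x), A'; split=> // a i A'a il0.
move: (A'y a i A'a il0); have [<-|li] := eqVneq l i.
  by rewrite !dfwithin => _; exact: AWx (A'A a A'a).
by rewrite !dfwithout.
Qed.

Definition disjoint_off (s1 s2 : seq I) : Prop :=
  forall i, i != l0 -> i \in s1 -> i \notin s2.

Lemma common_point_off_glue T (M : set T) (p : T -> P) (s : T -> seq I)
    (W : T -> forall i, set (K i)) (y0 : P) :
  (forall a, M a -> open_box_at (p a) (s a) (W a)) ->
  (forall a b, M a -> M b -> a <> b -> disjoint_off (s a) (s b)) ->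
  exists y : P, forall a i, M a -> i != l0 -> W a i (y i).
Proof.
move=> Mbox Mdisj.
pose owner i := exists a, [/\ M a, i != l0 & i \in s a].
exists (fun i => if pselect (owner i) is left h then p (proj1_sig (cid h)) i else y0 i).
move=> a i Ma il0 /=; have [_ pWa WaT] := Mbox a Ma.
case: pselect => [h|nowner]; last first.
  by rewrite WaT //; apply/negP => ias; apply: nowner; exists a.
case: (cid h) => b /= [Mb _ ibs].
have [ias|nias] := boolP (i \in s a); last by rewrite WaT.
have [->|ab] := pselect (a = b); first by have [_ + _] := Mbox b Mb; apply.
by have := Mdisj a b Ma Mb ab i il0 ias; rewrite ibs.
Qed.

Lemma uncountable_disjoint_off_subfamily T (A : set T) (s : T -> seq I) :
  ~ countable A -> (forall l, l != l0 -> countable [set a | A a /\ l \in s a]) ->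
  exists M, [/\ M `<=` A, ~ countable M &
    forall a b, M a -> M b -> a <> b -> disjoint_off (s a) (s b)].
Proof.
move=> nA sparse.
have disjC a b : disjoint_off (s a) (s b) -> disjoint_off (s b) (s a).
  by move=> dab i il0 ib; apply/negP => /(dab i il0); rewrite ib.
have [M [MA Mdisj Mmax]] := exists_maximal_pairwise A disjC.
exists M; split=> // cM.
pose used := \bigcup_(b in M) [set` s b] `&` [set i | i != l0].
pose hit := \bigcup_(l in used) [set a | A a /\ l \in s a].
have chit : countable hit.
  apply: bigcup_countable => [|l [_ ll0]]; last exact: sparse.
  apply: sub_countable (subset_card_le (@subIsetl _ _ _)) _.
  apply: bigcup_countable => // b _; exact: finite_set_countable.
have [a Aa /not_orP[nhit nMa]] : exists2 a, A a & ~ (hit a \/ M a).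
  apply: contrapT => /forall2NP cover; apply: nA.
  apply: sub_countable (subset_card_le (_ : A `<=` hit `|` M)) (countableU chit cM).
  by move=> a Aa; have [//|] := cover a; move/contrapT.
have [b Mb] := Mmax a Aa nMa; apply=> i il0 ia; apply/negP => ib; apply: nhit.
by exists i => //; split => //; exists b.
Qed.

Lemma common_point_off_sparse T (A : set T) p s (W : T -> forall i, set (K i)) :
  ~ countable A -> (forall a, A a -> open_box_at (p a) (s a) (W a)) ->
  (forall l, l != l0 -> countable [set a | A a /\ l \in s a]) ->
  common_point_off A W.
Proof.
move=> nA Abox sparse.
have [M [MA nM Mdisj]] := uncountable_disjoint_off_subfamily nA sparse.
have [a0 _] := uncountable_neq0 nA.
have [y My] := common_point_off_glue (p a0) (fun a Ma => Abox a (MA a Ma)) Mdisj.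
by exists y, M.
Qed.

Lemma common_point_off_boxes n T (A : set T) p s (W : T -> forall i, set (K i)) :
  ~ countable A ->
  (forall a, A a -> open_box_at (p a) (s a) (W a) /\ (size (s a) <= n)%N) ->
  common_point_off A W.
Proof.
(* Either some coordinate [l != l0] is used by uncountably many boxes, and the
   calibre of [K l] removes it from their supports, or the supports are sparse. *)
elim: n T A p s W => [|n IH] T A p s W nA Abox.
all: have [[l [ll0 nAl]]|sparse] :=
    pselect (exists l, l != l0 /\ ~ countable [set a | A a /\ l \in s a]);
  last by apply: common_point_off_sparse (fun a Aa => (Abox a Aa).1) _ => // l ll0;
          apply: contrapT => nc; apply: sparse; exists l.
  have [a [Aa]] := uncountable_neq0 nAl.
  by have [_] := Abox a Aa; rewrite leqn0 => /nilP ->.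
have lW a : A a /\ l \in s a -> open (W a l) /\ W a l !=set0.
  by move=> [Aa _]; have [[oW pW _] _] := Abox a Aa; split; [|exists (p a l)].
have [x [A2 [A2A nA2] A2x]] := calibre_aleph1_family (calK ll0) nAl lW.
apply: (common_point_offS (fun a A2a => (A2A a A2a).1)).
apply: (common_point_off_dfwith A2x).
apply: (IH _ A2 p (fun a => [seq i <- s a | i != l])) => // a A2a.
have [Aa las] := A2A a A2a; have [boxa sizea] := Abox a Aa.
split; first exact: open_box_at_dfwithT.
by rewrite -ltnS; exact: leq_trans (size_filter_predC1_lt las) sizea.
Qed.

Lemma common_point_off_open_boxes T (A : set T) p s (W : T -> forall i, set (K i)) :
  ~ countable A -> (forall a, A a -> open_box_at (p a) (s a) (W a)) ->
  common_point_off A W.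
Proof.
move=> nA Abox.
have [n nAn] : exists n, ~ countable (A `&` [set a | (size (s a) <= n)%N]).
  by apply: uncountable_bigcup_nat nA _ => a _; exists (size (s a)) => //=.
apply: common_point_offS (@subIsetl _ A _) _.
by apply: (common_point_off_boxes (n := n) (p := p) (s := s) nAn) => a [/Abox].
Qed.

End calibre_off_l0.

Lemma prod_cozero_ccc (R : realType) (l0 : I) :
  (forall l, l != l0 -> calibre_aleph1 (K l)) -> cozero_ccc R (K l0) -> cozero_ccc R P.
Proof.
move=> calK ccc0 F Fcoz Fdisj; apply: contrapT => nF.
have [z0 _] : [set: P] !=set0.
  by have [D FD] := uncountable_neq0 nF; have [_ [z _]] := Fcoz D FD; exists z.
have /choice [pick pickP] : forall D : set P, exists psW : P * seq I * (forall i, set (K i)),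
    F D -> open_box_at psW.1.1 psW.1.2 psW.2 /\ box psW.2 `<=` D.
  move=> D; have [FD|nFD] := pselect (F D); last by exists (z0, [::], fun=> setT) => /nFD.
  have [Dcoz [p Dp]] := Fcoz D FD.
  have /nbhs_open_box [s [W boxW]] : nbhs p D.
    by apply: open_nbhs_nbhs; split=> //; exact: cozero_set_open Dcoz.
  by exists (p, s, W).
have [y [A' [A'F nA' A'y]]] := common_point_off_open_boxes calK nF (fun D FD => (pickP D FD).1).
pose sec D := dfwith y l0 @^-1` D.
have sec_pick D : A' D -> sec D ((pick D).1.1 l0).
  move=> A'D; have [[_ pW _] WD] := pickP D (A'F D A'D); apply: WD => i.
  by case: dfwithP => [|j l0j]; [exact: pW | apply: A'y; rewrite // eq_sym].
apply/nA'/(inj_rel_countable (B := sec @` A') (rel := fun D S => sec D = S)).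
- apply: ccc0 => [_ [D A'D <-]|_ _ x [D A'D <-] [D' A'D' <-] Dx D'x].
    split; last by exists ((pick D).1.1 l0); exact: sec_pick.
    apply: (@cozero_set_preimage R P); first exact: dfwith_continuous.
    by have [] := Fcoz D (A'F D A'D).
  by rewrite (Fdisj D D' _ (A'F D A'D) (A'F D' A'D') Dx D'x).
- by move=> D A'D; exists (sec D) => //; exists D.
- move=> D D' _ A'D A'D' _ <- secDD'.
  have D'x : sec D' ((pick D).1.1 l0) by rewrite secDD'; exact: sec_pick.
  exact: Fdisj (A'F D A'D) (A'F D' A'D') (sec_pick D A'D) D'x.
Qed.

End product_boxes.

Theorem corollary6p5 (R : realType) (Lambda : Type)
    (X : Lambda -> topologicalType) (l0 : Lambda) :
  C_countable_sup_property R (X l0) ->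
  (forall l, l <> l0 -> calibre_aleph1 (X l)) ->
  C_countable_sup_property R (prod_topology X).
Proof.
move=> csp0 calX; apply: cozero_ccc_csp.
apply: (@prod_cozero_ccc {classic Lambda} X R l0) => [l /eqP|]; first exact: calX.
exact: csp_cozero_ccc.
Qed.
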